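(* For each $k\in\mathbb{N}$ let $a_k,b_k,c_k\in\mathbb{R}$ with $a_k\ge0$, and $f_k(x)=a_kx^2+b_kx+c_k$ on $\mathbb{R}$ (so $f_k\in\Gamma_0(\mathbb{R})$). Then for $r>0$, $$e_rf_k(x)=\frac{a_kr}{2a_k+r}x^2+\frac{b_kr}{2a_k+r}x+c_k-\frac{b_k^2}{2(2a_k+r)}.$$ Moreover, suppose $f_k$ epiconverges to $f$ as $k\to\infty$. Then: (i) if $f\equiv\infty$, then $e_rf\equiv\infty$; (ii) if $f(x)=-\infty$ for some $x$, then $e_rf\equiv-\infty$; (iii) if $f$ is proper, then $e_rf(x)=arx^2+bx+c$ for some $a\ge0$ and $b,c\in\mathbb{R}$; this holds even in the case where $a_k\to\infty$ and $f$ is of the form $\iota_{\{\beta\}}+\gamma$ for constants $\beta,\gamma$.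
   Context: $\Gamma_0(\mathbb{R})$ is the set of proper convex lsc functions $\mathbb{R}\to\mathbb{R}\cup\{\infty\}$. The Moreau envelope is $e_rf(x)=\inf_{y}\{f(y)+\frac r2(y-x)^2\}$; for improper $f$ in (i),(ii) it is understood via the same formula. Epiconvergence $f_k\to f$ means the epigraphs of $f_k$ converge to the epigraph of $f$ in the Painlevé–Kuratowski sense. $\iota_{\{\beta\}}$ is the indicator function of $\{\beta\}$. *)

From HB Require Import structures.
From mathcomp Require Import all_boot all_order all_algebra.
From mathcomp Require Import all_classical all_reals all_analysis.
Set Implicit Arguments. Unset Strict Implicit. Unset Printing Implicit Defensive.
Import Order.TTheory GRing.Theory Num.Theory.
Import numFieldNormedType.Exports.
Local Open Scope classical_set_scope.
Local Open Scope ring_scope.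

Definition moreau_env (R : realType) (r : R) (f : R -> \bar R) (x : R) : \bar R :=
  ereal_inf [set (f y + ((r / 2) * (y - x) ^+ 2)%:E)%E | y in setT].

Definition epi (R : realType) (f : R -> \bar R) : set (R * R) :=
  [set p | (f p.1 <= p.2%:E)%E].

(* Painleve-Kuratowski inner and outer limits of a sequence of sets
   (Rockafellar-Wets, Def. 4.1), in the topological space T. *)
Definition pk_inner (T : topologicalType) (C : nat -> set T) : set T :=
  [set x | exists (N : nat) (p : nat -> T),
     (forall k, (N <= k)%N -> C k (p k)) /\ p @ \oo --> x].

Definition pk_outer (T : topologicalType) (C : nat -> set T) : set T :=
  [set x | exists (phi : nat -> nat) (p : nat -> T),
     (forall j, (phi j < phi j.+1)%N) /\ (forall j, C (phi j) (p j)) /\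
     p @ \oo --> x].

Definition pk_converges (T : topologicalType) (C : nat -> set T) (L : set T) :=
  pk_inner C = L /\ pk_outer C = L.

Definition epiconverges (R : realType) (fk : nat -> R -> \bar R) (f : R -> \bar R) :=
  @pk_converges (R * R)%type (fun k => epi (fk k)) (epi f).

Definition proper_fun (R : realType) (f : R -> \bar R) :=
  (forall x, f x != -oo)%E /\ (exists x, f x != +oo)%E.

Definition indic_single (R : realType) (beta : R) (x : R) : \bar R :=
  if x == beta then 0%E else +oo%E.

From HB Require Import structures.
From mathcomp Require Import all_boot all_order all_algebra.
From mathcomp Require Import all_classical all_reals all_analysis.
From mathcomp Require Import ring lra.
Set Implicit Arguments. Unset Strict Implicit. Unset Printing Implicit Defensive.
Import Order.TTheory GRing.Theory Num.Theory.
Import numFieldNormedType.Exports.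
Local Open Scope classical_set_scope.
Local Open Scope ring_scope.

(* Completing the square shows that the Moreau envelope of a convex quadratic
   is again a convex quadratic, attained at an explicit prox point.
   For a proper epi-limit f, fix x.  A point of epi f is a limit of points of
   the epigraphs of the f_k, which bounds e_r f_k(x) from above.  It is also
   bounded from below: otherwise, stepping from those points towards the prox
   points along a subsequence, convexity yields bounded abscissae at which the
   f_k become arbitrarily negative, and f = -oo at a cluster point.  So the
   quadratics e_r f_k are bounded at -1, 0 and 1, and along a subsequence
   their coefficients converge, to those of a quadratic G.  Inner limits of
   the epigraphs give G <= e_r f; the outer limit of the points of the graphs
   of the f_k above the converging prox points gives e_r f <= G. *)

Section QuadraticEnvelope.
Variables (R : realFieldType) (r : R).
Hypothesis r_gt0 : 0 < r.

Definition quad (a b c x : R) := a * x ^+ 2 + b * x + c.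

Definition quad_env (a b c : R) : R -> R :=
  quad (a * r / (2 * a + r)) (b * r / (2 * a + r)) (c - b ^+ 2 / (2 * (2 * a + r))).

Definition quad_prox (a b x : R) := (r * x - b) / (2 * a + r).

Variables (a b c : R).
Hypothesis a_ge0 : 0 <= a.

Let den_gt0 : 0 < 2 * a + r.
Proof. by rewrite ltr_wpDl // mulr_ge0. Qed.

Let den_neq0 : 2 * a + r != 0.
Proof. exact: lt0r_neq0. Qed.

Lemma quad_env_decomp x y :
  quad a b c y + r / 2 * (y - x) ^+ 2 =
  quad_env a b c x + (a + r / 2) * (y - quad_prox a b x) ^+ 2.
Proof. by rewrite /quad_env /quad /quad_prox; field. Qed.

Lemma quad_env_le x y : quad_env a b c x <= quad a b c y + r / 2 * (y - x) ^+ 2.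
Proof.
rewrite quad_env_decomp lerDl mulr_ge0 ?sqr_ge0 // addr_ge0 // divr_ge0 //.
exact: ltW.
Qed.

Lemma quad_env_prox x :
  quad a b c (quad_prox a b x) + r / 2 * (quad_prox a b x - x) ^+ 2 = quad_env a b c x.
Proof. by rewrite quad_env_decomp subrr expr0n mulr0 addr0. Qed.

(* The gradient formula prox(x) = x - e'(x) / r, for e := quad_env a b c. *)
Lemma quad_proxE x :
  quad_prox a b x = x - (2 * (a * r / (2 * a + r)) * x + b * r / (2 * a + r)) / r.
Proof. by rewrite /quad_prox; field; rewrite den_neq0 gt_eqF. Qed.

Lemma quad_env_coef2_ge0 : 0 <= a * r / (2 * a + r).
Proof. by rewrite divr_ge0 ?mulr_ge0 // ltW. Qed.

Lemma quad_convex p y l : 0 <= l <= 1 ->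
  quad a b c (p + l * (y - p)) <= (1 - l) * quad a b c p + l * quad a b c y.
Proof.
move=> /andP[l_ge0 l_le1]; rewrite -subr_ge0.
have -> : (1 - l) * quad a b c p + l * quad a b c y - quad a b c (p + l * (y - p))
    = a * (l * (1 - l)) * (y - p) ^+ 2 by rewrite /quad; ring.
by rewrite mulr_ge0 ?sqr_ge0 // mulr_ge0 // mulr_ge0 // subr_ge0.
Qed.

Lemma quad0 : quad a b c 0 = c.
Proof. by rewrite /quad expr2 !mulr0 !add0r. Qed.

Lemma quad_coef2E : a = (quad a b c 1 + quad a b c (-1)) / 2 - quad a b c 0.
Proof. by rewrite /quad; field. Qed.

Lemma quad_coef1E : b = (quad a b c 1 - quad a b c (-1)) / 2.
Proof. by rewrite /quad; field. Qed.

End QuadraticEnvelope.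

Section MoreauEnvelope.
Variables (R : realType) (r : R).

Lemma moreau_env_quad (a b c x : R) : 0 < r -> 0 <= a ->
  moreau_env r (fun y => (quad a b c y)%:E) x = (quad_env r a b c x)%:E.
Proof.
move=> r_gt0 a_ge0; apply/eqP; rewrite eq_le; apply/andP; split.
- apply: ereal_inf_lbound; exists (quad_prox r a b x) => //.
  by rewrite -EFinD quad_env_prox.
- apply: le_ereal_inf_tmp => _ [y _ <-].
  by rewrite -EFinD lee_fin quad_env_le.
Qed.

Lemma moreau_env_pinfty (f : R -> \bar R) x :
  (forall y, f y = +oo%E) -> moreau_env r f x = +oo%E.
Proof. by move=> fy; apply/ereal_inf_pinfty => _ [y _ <-]; rewrite fy. Qed.

Lemma moreau_env_ninfty (f : R -> \bar R) x0 x :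
  f x0 = -oo%E -> moreau_env r f x = -oo%E.
Proof.
move=> fx0; apply/eqP; rewrite eq_le leNye andbT.
by apply: ereal_inf_lbound; exists x0 => //; rewrite fx0.
Qed.

Lemma moreau_env_indic_single (beta gamma x : R) :
  moreau_env r (fun y => indic_single beta y + gamma%:E)%E x =
  (quad (r / 2) (- (r * beta)) (r * beta ^+ 2 / 2 + gamma) x)%:E.
Proof.
have value : gamma + r / 2 * (beta - x) ^+ 2 =
    quad (r / 2) (- (r * beta)) (r * beta ^+ 2 / 2 + gamma) x.
  by rewrite /quad; field.
apply/eqP; rewrite eq_le; apply/andP; split.
- apply: ereal_inf_lbound; exists beta => //.
  by rewrite /indic_single eqxx add0e -EFinD value.
- apply: le_ereal_inf_tmp => _ [y _ <-]; rewrite /indic_single.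
  case: eqP => [->|_]; last by rewrite leey.
  by rewrite add0e -EFinD value.
Qed.

End MoreauEnvelope.

Definition descent_point (R : realFieldType) (p y : R) :=
  p + (1 + `|y - p|)^-1 * (y - p).

Lemma descent_point_near (R : realFieldType) (p y : R) : `|descent_point p y - p| <= 1.
Proof.
rewrite /descent_point addrAC subrr add0r normrM ger0_norm ?invr_ge0 ?addr_ge0 //.
by rewrite mulrC ler_pdivrMr ?mul1r ?lerDr // ltr_pwDl.
Qed.

Lemma descent_point_bounded (R : realFieldType) (p y x0 : R) :
  `|p - x0| <= 1 -> `|descent_point p y| <= `|x0| + 2.
Proof.
move=> p_near; have step := descent_point_near p y.
rewrite (_ : descent_point p y = (descent_point p y - p) + (p - x0) + x0).
  have := ler_normD (descent_point p y - p + (p - x0)) x0.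
  have := ler_normD (descent_point p y - p) (p - x0).
  lra.
by rewrite addrA !subrK.
Qed.

(* With y the prox point and l := (1 + |y - p|)^-1, convexity bounds q at the
   descent point by (1 - l) q(p) + l q(y), where q(y) = e(x) - r/2 |y - x|^2;
   AM-GM on T |y - x| shows that l (n + r/2 |y - x|^2) >= T. *)
Lemma quad_descent (R : realFieldType) (r a b c x p V n T : R) : 0 < r -> 0 <= a ->
  quad a b c p <= V -> quad_env r a b c x <= - n -> 0 <= T ->
  T * (1 + `|x - p|) + T ^+ 2 / (2 * r) <= n ->
  quad a b c (descent_point p (quad_prox r a b x)) <= `|V| - T.
Proof.
move=> r_gt0 a_ge0 qp_le env_le T_ge0 T_le.
set y := quad_prox r a b x; set D := y - p; set l := (1 + `|D|)^-1; set s := `|y - x|.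
have D_ge0 := normr_ge0 D; have s_ge0 := normr_ge0 (y - x).
have l_gt0 : 0 < l by rewrite invr_gt0; lra.
have l_le1 : l <= 1 by rewrite invf_le1; lra.
have qy : quad a b c y = quad_env r a b c x - r / 2 * s ^+ 2.
  by rewrite -(quad_env_prox r_gt0 _ c a_ge0) real_normK ?num_real // addrK.
have D_le : `|D| <= s + `|x - p|.
  by rewrite (_ : D = (y - x) + (x - p)) ?ler_normD // /D addrA subrK.
have amgm : T * s <= T ^+ 2 / (2 * r) + r / 2 * s ^+ 2.
  rewrite -subr_ge0 (_ : _ - _ = (T - r * s) ^+ 2 / (2 * r)); last by field; lra.
  by rewrite divr_ge0 ?sqr_ge0 //; lra.
have gain : T <= l * (n + r / 2 * s ^+ 2).
  rewrite /l mulrC ler_pdivlMr; last lra.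
  have : T * (1 + `|D|) <= T * (1 + (s + `|x - p|)) by rewrite ler_wpM2l // lerD2l.
  nra.
have stay : (1 - l) * quad a b c p <= `|V|.
  have := ler_norm V; have := normr_ge0 V; have : 0 <= 1 - l by lra.
  nra.
have := @quad_convex _ a b c a_ge0 p y l; rewrite (ltW l_gt0) l_le1 => /(_ isT).
have : l * quad a b c y <= - (l * (n + r / 2 * s ^+ 2)).
  by rewrite -mulrN; apply: ler_wpM2l; [exact: ltW | rewrite qy; lra].
lra.
Qed.

Section Subsequences.
Variable phi : nat -> nat.
Hypothesis phi_incr : increasing_seq phi.

Lemma increasing_seq_ltn : {mono phi : m n / (m < n)%N}.
Proof. exact: leqW_mono. Qed.

Lemma increasing_seq_geq n : (n <= phi n)%N.
Proof.
by elim: n => // n ih; rewrite (leq_ltn_trans ih) // increasing_seq_ltn.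
Qed.

Lemma increasing_seq_cvg : phi @ \oo --> \oo.
Proof.
move=> A [N _ NA]; exists N => // n /= Nn.
exact/NA/(leq_trans Nn (increasing_seq_geq n)).
Qed.

Lemma increasing_seq_comp psi : increasing_seq psi -> increasing_seq (phi \o psi).
Proof. by move=> psi_incr m n; rewrite /= phi_incr -leEnat psi_incr. Qed.

End Subsequences.

Lemma increasing_seq_addn N : increasing_seq (addn^~ N).
Proof. by move=> m n; rewrite leEnat leq_add2r. Qed.

Lemma frequently_subseq (P : nat -> nat -> Prop) :
  (forall j N, exists2 k, (N <= k)%N & P j k) ->
  exists2 phi : nat -> nat, increasing_seq phi & forall j, P j (phi j).
Proof.
move=> freqP.
have /choice[h hP] : forall jN : nat * nat, exists k, (jN.2 <= k)%N /\ P jN.1 k.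
  by move=> [j N] /=; have [k] := freqP j N; exists k.
pose fix phi j := if j is j'.+1 then h (j, (phi j').+1) else h (0, 0)%N.
exists phi; last by case=> [|j]; [exact: (hP (0, 0)%N).2 | exact: (hP (j.+1, _)).2].
by apply/increasing_seqP => j; exact: (hP (j.+1, (phi j).+1)).1.
Qed.

Lemma bounded_subseq_cvg (R : realType) (u : nat -> R) (M : R) :
  (\forall n \near \oo, `|u n| <= M) ->
  exists2 phi : nat -> nat, increasing_seq phi & exists l : R, u \o phi @ \oo --> l.
Proof.
move=> [N _ uM].
have /bolzano_weierstrass[phi phi_incr phi_cvg] : bounded_fun (fun n => u (n + N)%N).
  exists M; split; first exact: num_real.
  by move=> K MK n _; apply: le_trans (uM _ (leq_addl _ _)) (ltW MK).
exists (addn^~ N \o phi).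
  exact: (increasing_seq_comp (increasing_seq_addn N) phi_incr).
by move/cvg_ex: phi_cvg.
Qed.

Lemma pk_outer_near (T : topologicalType) (C : nat -> set T) (phi : nat -> nat)
    (p : nat -> T) (x : T) :
  increasing_seq phi -> p @ \oo --> x -> (\forall j \near \oo, C (phi j) (p j)) ->
  pk_outer C x.
Proof.
move=> phi_incr p_cvg [J _ CJ].
exists (phi \o addn^~ J), (p \o addn^~ J); split; [|split].
- by move=> j; rewrite /= increasing_seq_ltn // addSn.
- by move=> j; apply: CJ; rewrite /= leq_addl.
- exact: cvg_comp (cvg_addnr J) p_cvg.
Qed.

Section QuadraticSequences.
Variables (R : realType) (A B C : nat -> R).
Local Notation q k := (quad (A k) (B k) (C k)).

Lemma cvg_quad (A0 B0 C0 x : R) :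
  A @ \oo --> A0 -> B @ \oo --> B0 -> C @ \oo --> C0 ->
  (fun k => q k x) @ \oo --> quad A0 B0 C0 x.
Proof. by move=> cA cB cC; apply: cvgD => //; apply: cvgD; apply: cvgMr_tmp. Qed.

Lemma quad_coef_subseq_cvg :
  (forall x, exists M, \forall k \near \oo, `|q k x| <= M) ->
  exists2 psi : nat -> nat, increasing_seq psi &
    exists A0 B0 C0 : R,
      [/\ A \o psi @ \oo --> A0, B \o psi @ \oo --> B0 & C \o psi @ \oo --> C0].
Proof.
move=> q_bnd.
have [Mm qm_bnd] := q_bnd (-1).
have [M0 q0_bnd] := q_bnd 0.
have [M1 q1_bnd] := q_bnd 1.
have [phi1 phi1_incr [lm cvg_m]] := bounded_subseq_cvg qm_bnd.
have [phi2 phi2_incr [l0 cvg_0]] :=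
  bounded_subseq_cvg (increasing_seq_cvg phi1_incr q0_bnd).
have phi12_incr := increasing_seq_comp phi1_incr phi2_incr.
have [phi3 phi3_incr [l1 cvg_1]] :=
  bounded_subseq_cvg (increasing_seq_cvg phi12_incr q1_bnd).
pose psi := phi1 \o phi2 \o phi3.
have psi_incr : increasing_seq psi.
  exact: (increasing_seq_comp phi12_incr phi3_incr).
have {}cvg_m : (fun j => q (psi j) (-1)) @ \oo --> lm.
  exact: cvg_comp (increasing_seq_cvg (increasing_seq_comp phi2_incr phi3_incr)) cvg_m.
have {}cvg_0 : (fun j => q (psi j) 0) @ \oo --> l0.
  exact: cvg_comp (increasing_seq_cvg phi3_incr) cvg_0.
exists psi => //; exists ((l1 + lm) / 2 - l0), ((l1 - lm) / 2), l0; split.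
- rewrite (_ : A \o psi = fun j => (q (psi j) 1 + q (psi j) (-1)) / 2 - q (psi j) 0).
    by apply: cvgB => //; apply: cvgMr_tmp; apply: cvgD.
  by apply/funext => j; rewrite /= -quad_coef2E.
- rewrite (_ : B \o psi = fun j => (q (psi j) 1 - q (psi j) (-1)) / 2).
    by apply: cvgMr_tmp; apply: cvgB.
  by apply/funext => j; rewrite /= -quad_coef1E.
- by rewrite (_ : C \o psi = fun j => q (psi j) 0) // funeqE => j; rewrite /= quad0.
Qed.

End QuadraticSequences.

Lemma cvg_sqr (R : realType) (T : Type) (F : set_system T) {FF : Filter F}
    (u : T -> R) (l : R) :
  u @ F --> l -> (fun t => u t ^+ 2) @ F --> l ^+ 2.
Proof. by move=> ul; rewrite expr2; under eq_fun do rewrite expr2; exact: cvgM. Qed.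

Lemma epi_EFin (R : realType) (h : R -> R) (p : R * R) :
  epi (fun x => (h x)%:E) p <-> h p.1 <= p.2.
Proof. by rewrite /epi /= lee_fin. Qed.

Section EpiLimitOfQuadratics.
Variables (R : realType) (r : R) (a b c : nat -> R) (f : R -> \bar R).
Hypothesis r_gt0 : 0 < r.
Hypothesis a_ge0 : forall k, 0 <= a k.
Hypothesis f_epi : epiconverges (fun k x => (quad (a k) (b k) (c k) x)%:E) f.
Hypothesis f_proper : proper_fun f.

Local Notation q k := (quad (a k) (b k) (c k)).
Local Notation e k := (quad_env r (a k) (b k) (c k)).
Local Notation prox k := (quad_prox r (a k) (b k)).

Let epi_inner y t : (f y <= t%:E)%E ->
  exists2 p : nat -> R * R,
    (\forall k \near \oo, q k (p k).1 <= (p k).2) & p @ \oo --> (y, t).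
Proof.
move=> fy; have : pk_inner (fun k => epi (fun x => (q k x)%:E)) (y, t).
  by rewrite f_epi.1.
by move=> [N [p [p_epi p_cvg]]]; exists p => //; exists N => // k /p_epi/epi_EFin.
Qed.

Let epi_outer y t :
  pk_outer (fun k => epi (fun x => (q k x)%:E)) (y, t) -> (f y <= t%:E)%E.
Proof. by rewrite f_epi.2. Qed.

Lemma epilimit_anchor : exists x0 V (p : nat -> R),
  \forall k \near \oo, `|p k - x0| <= 1 /\ q k (p k) <= V.
Proof.
have [f_nNy [x0 fx0_npy]] := f_proper.
have [v0 fx0] : exists v0, f x0 = v0%:E.
  by move: (f_nNy x0) fx0_npy; case: (f x0) => [v| |] //; exists v.
have [|p p_epi p_cvg] := @epi_inner x0 v0; first by rewrite fx0.
have p1_cvg : (fun k => (p k).1) @ \oo --> x0 by apply: cvg_comp p_cvg _; exact: cvg_fst.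
have p2_cvg : (fun k => (p k).2) @ \oo --> v0 by apply: cvg_comp p_cvg _; exact: cvg_snd.
have near1 := cvgr_dist_le _ _ p1_cvg _ ltr01.
have near2 := cvgr_dist_le _ _ p2_cvg _ ltr01.
exists x0, (v0 + 1), (fun k => (p k).1); near=> k; split.
- by rewrite distrC; near: k; exact: near1.
- have : `|v0 - (p k).2| <= 1 by near: k; exact: near2.
  have : q k (p k).1 <= (p k).2 by near: k; exact: p_epi.
  rewrite ler_norml => ? /andP[? ?]; lra.
Unshelve. all: end_near. Qed.

Lemma quad_env_bounded_above x : exists M, \forall k \near \oo, e k x <= M.
Proof.
have [x0 [V [p anchor]]] := epilimit_anchor.
exists (V + r / 2 * (1 + `|x0 - x|) ^+ 2); near=> k.
have [p_near qp_le] : `|p k - x0| <= 1 /\ q k (p k) <= V by near: k; exact: anchor.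
apply: le_trans (quad_env_le r_gt0 _ _ (a_ge0 k) x (p k)) _.
rewrite lerD //; apply: ler_wpM2l; first by rewrite divr_ge0 // ltW.
rewrite -real_normK ?num_real //; apply: lerXn2r; rewrite ?nnegrE ?addr_ge0 //.
rewrite (_ : p k - x = (p k - x0) + (x0 - x)); last by rewrite addrA subrK.
by apply: le_trans (ler_normD _ _) _; rewrite lerD2r.
Unshelve. all: end_near. Qed.

Lemma epi_limit_ninfty (phi : nat -> nat) (w : nat -> R) (M : R) :
  increasing_seq phi -> (\forall j \near \oo, `|w j| <= M) ->
  (forall t, \forall j \near \oo, q (phi j) (w j) <= t) ->
  exists z, f z = -oo%E.
Proof.
move=> phi_incr w_bnd w_low.
have [psi psi_incr [z w_cvg]] := bounded_subseq_cvg w_bnd.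
have fz_le t : (f z <= t%:E)%E.
  apply: epi_outer; apply: (pk_outer_near (p := fun j => (w (psi j), t))).
  - exact: (increasing_seq_comp phi_incr psi_incr).
  - exact: cvg_pair w_cvg (cvg_cst t).
  - have low : \forall j \near \oo, q (phi (psi j)) (w (psi j)) <= t.
      exact: increasing_seq_cvg psi_incr _ (w_low t).
    by apply: filterS low => j qjt; exact/epi_EFin.
exists z; case fz: (f z) (fz_le 0) => [v| |] // _.
by have := fz_le (v - 1)%R; rewrite fz lee_fin leNgt gtrBl ltr01.
Qed.

Lemma quad_env_bounded_below x : exists m, \forall k \near \oo, m <= e k x.
Proof.
apply: contrapT => no_lb.
have freq j N : exists2 k, (N <= k)%N & e k x <= - j%:R.
  apply: contrapT => no_k; apply: no_lb; exists (- j%:R), N => // k /= Nk.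
  by rewrite leNgt; apply/negP => lt_k; apply: no_k; exists k => //; exact: ltW.
have [phi phi_incr phi_low] := frequently_subseq freq.
have [x0 [V [p anchor]]] := epilimit_anchor.
have {}anchor : \forall j \near \oo, `|p (phi j) - x0| <= 1 /\ q (phi j) (p (phi j)) <= V.
  exact: increasing_seq_cvg phi_incr _ anchor.
pose w j := descent_point (p (phi j)) (quad_prox r (a (phi j)) (b (phi j)) x).
have [z fz] : exists z, f z = -oo%E.
  apply: (epi_limit_ninfty (w := w) (M := `|x0| + 2) phi_incr) => [|t].
  - by apply: filterS anchor => j [p_near _]; exact: descent_point_bounded.
  - pose T := Num.max 0 (`|V| - t).
    have T_ge0 : 0 <= T by rewrite le_max lexx.
    have VT_le : `|V| - T <= t by rewrite lerBlDr addrC -lerBlDr le_max lexx orbT.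
    near=> j; apply: le_trans VT_le.
    have [p_near qp_le] : `|p (phi j) - x0| <= 1 /\ q (phi j) (p (phi j)) <= V.
      by near: j; exact: anchor.
    apply: (quad_descent r_gt0 (a_ge0 _) qp_le (phi_low j) T_ge0).
    apply: le_trans (_ : T * (2 + `|x - x0|) + T ^+ 2 / (2 * r) <= j%:R).
      rewrite lerD2r ler_wpM2l // -addrA lerD2l addrC.
      rewrite (_ : x - p (phi j) = (x - x0) + (x0 - p (phi j))); last first.
        by rewrite addrA subrK.
      by apply: le_trans (ler_normD _ _) _; rewrite lerD2l distrC.
    by near: j; exact: nbhs_infty_ger.
by have := f_proper.1 z; rewrite fz.
Unshelve. all: end_near. Qed.

Lemma quad_env_bounded x : exists M, \forall k \near \oo, `|e k x| <= M.
Proof.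
have [[m m_le] [M le_M]] := (quad_env_bounded_below x, quad_env_bounded_above x).
exists (`|m| + `|M|); near=> k.
have : m <= e k x by near: k.
have : e k x <= M by near: k.
have := ler_norm M; have := ler_norm (- m); have := normr_ge0 m; have := normr_ge0 M.
rewrite normrN ler_norml; lra.
Unshelve. all: end_near. Qed.

Lemma quad_env_subseq_cvg : exists2 psi : nat -> nat, increasing_seq psi &
  exists A0 B0 C0 : R, 0 <= A0 /\ forall x,
    (fun j => e (psi j) x) @ \oo --> quad A0 B0 C0 x /\
    (fun j => prox (psi j) x) @ \oo --> x - (2 * A0 * x + B0) / r.
Proof.
pose A k := a k * r / (2 * a k + r).
pose B k := b k * r / (2 * a k + r).
pose C k := c k - b k ^+ 2 / (2 * (2 * a k + r)).
have [psi psi_incr [A0 [B0 [C0 [A_cvg B_cvg C_cvg]]]]] :=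
  quad_coef_subseq_cvg (A := A) (B := B) (C := C) quad_env_bounded.
exists psi => //; exists A0, B0, C0; split.
  apply: (ler_cvg_to (cvg_cst 0) A_cvg); near=> j.
  exact: (quad_env_coef2_ge0 r_gt0 (a_ge0 _)).
move=> x; split; first exact: cvg_quad.
under eq_fun do rewrite quad_proxE // -/(A _) -/(B _).
apply: cvgB; first exact: cvg_cst.
by apply: cvgMr_tmp; apply: cvgD => //; apply: cvgMr_tmp; apply: cvgMl_tmp.
Unshelve. all: end_near. Qed.

Section EnvelopeLimits.
Variables (psi : nat -> nat) (x L : R).
Hypotheses (psi_incr : increasing_seq psi) (env_cvg : (fun j => e (psi j) x) @ \oo --> L).

Lemma moreau_env_le_lim (y : R) :
  (fun j => prox (psi j) x) @ \oo --> y -> (moreau_env r f x <= L%:E)%E.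
Proof.
move=> prox_cvg.
have /epi_outer fy : pk_outer (fun k => epi (fun x => (q k x)%:E))
    (y, L - r / 2 * (y - x) ^+ 2).
  apply: (pk_outer_near psi_incr
    (p := fun j => (prox (psi j) x, e (psi j) x - r / 2 * (prox (psi j) x - x) ^+ 2))).
  - have sqr_cvg : (fun j => (prox (psi j) x - x) ^+ 2) @ \oo --> (y - x) ^+ 2.
      by apply: cvg_sqr; apply: cvgB prox_cvg (cvg_cst x).
    have t_cvg : (fun j => e (psi j) x - r / 2 * (prox (psi j) x - x) ^+ 2) @ \oo
        --> L - r / 2 * (y - x) ^+ 2 by apply: cvgB env_cvg _; exact: cvgMl_tmp.
    exact: cvg_pair prox_cvg t_cvg.
  - near=> j; apply/epi_EFin => /=.
    by rewrite -(quad_env_prox r_gt0 _ (c (psi j)) (a_ge0 (psi j))) addrK.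
apply: ge_ereal_inf; exists (f y + (r / 2 * (y - x) ^+ 2)%:E)%E; first by exists y.
by rewrite -leeBrDr // -EFinB.
Unshelve. all: end_near. Qed.

Lemma lim_le_moreau_env : (L%:E <= moreau_env r f x)%E.
Proof.
apply: le_ereal_inf_tmp => _ [y _ <-].
case fy: (f y) => [v| |]; last by have := f_proper.1 y; rewrite fy.
  have [|p p_epi p_cvg] := @epi_inner y v; first by rewrite fy.
  have p1_cvg : (fun k => (p k).1) @ \oo --> y by apply: cvg_comp p_cvg _; exact: cvg_fst.
  have p2_cvg : (fun k => (p k).2) @ \oo --> v by apply: cvg_comp p_cvg _; exact: cvg_snd.
  have {}p_epi : \forall j \near \oo, q (psi j) (p (psi j)).1 <= (p (psi j)).2.
    exact: increasing_seq_cvg psi_incr _ p_epi.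
  rewrite -EFinD lee_fin; apply: (ler_cvg_to env_cvg
    (g := fun j => (p (psi j)).2 + r / 2 * ((p (psi j)).1 - x) ^+ 2)).
    apply: cvgD; first exact: cvg_comp (increasing_seq_cvg psi_incr) p2_cvg.
    apply: cvgMl_tmp; apply: cvg_sqr; apply: cvgB (cvg_cst x).
    exact: cvg_comp (increasing_seq_cvg psi_incr) p1_cvg.
  apply: filterS p_epi => j qp_le.
  by apply: le_trans (quad_env_le r_gt0 _ _ (a_ge0 _) x (p (psi j)).1) _; rewrite lerD2r.
by rewrite addye // leey.
Qed.

End EnvelopeLimits.

Theorem moreau_env_proper_epilimit : exists A0 B0 C0 : R,
  0 <= A0 /\ forall x, moreau_env r f x = (quad A0 B0 C0 x)%:E.
Proof.
have [psi psi_incr [A0 [B0 [C0 [A0_ge0 env_cvg]]]]] := quad_env_subseq_cvg.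
exists A0, B0, C0; split => // x; have [e_cvg prox_cvg] := env_cvg x.
apply/eqP; rewrite eq_le.
by rewrite (moreau_env_le_lim psi_incr e_cvg prox_cvg) (lim_le_moreau_env psi_incr e_cvg).
Qed.

End EpiLimitOfQuadratics.

Theorem theorem3p1 (R : realType) (a b c : nat -> R)
  (ha : forall k, 0 <= a k) (f : R -> \bar R) (r : R) (hr : 0 < r) :
  let fk := fun (k : nat) (x : R) => (a k * x ^+ 2 + b k * x + c k)%:E in
  (forall k x,
     moreau_env r (fk k) x =
       ((a k * r) / (2 * a k + r) * x ^+ 2 + (b k * r) / (2 * a k + r) * x
        + c k - (b k) ^+ 2 / (2 * (2 * a k + r)))%:E)
  /\
  (epiconverges fk f ->
     ((forall x, f x = +oo%E) -> forall x, moreau_env r f x = +oo%E)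
     /\ ((exists x, f x = -oo%E) -> forall x, moreau_env r f x = -oo%E)
     /\ (proper_fun f ->
           exists a0 b0 c0 : R, 0 <= a0 /\
             forall x, moreau_env r f x = (a0 * r * x ^+ 2 + b0 * x + c0)%:E)
     /\ ((a @ \oo --> +oo) ->
         (exists beta gamma : R, f = (fun x => indic_single beta x + gamma%:E)%E) ->
           exists a0 b0 c0 : R, 0 <= a0 /\
             forall x, moreau_env r f x = (a0 * r * x ^+ 2 + b0 * x + c0)%:E)).
Proof.
move=> fk; split.
  by move=> k x; rewrite moreau_env_quad // /quad_env /quad addrA.
move=> f_epi; split; [|split; [|split]].
- by move=> f_pinfty x; exact: moreau_env_pinfty.
- by move=> [x0 fx0] x; exact: moreau_env_ninfty fx0.
- move=> f_proper.
  have [A0 [B0 [C0 [A0_ge0 envE]]]] := moreau_env_proper_epilimit hr ha f_epi f_proper.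
  exists (A0 / r), B0, C0; split; first by rewrite divr_ge0 // ltW.
  by move=> x; rewrite envE /quad divfK // gt_eqF.
-
  move=> _ [beta [gamma ->]].
  exists (1 / 2), (- (r * beta)), (r * beta ^+ 2 / 2 + gamma); split.
    by rewrite divr_ge0.
  by move=> x; rewrite moreau_env_indic_single /quad mul1r [_^-1 * r]mulrC.
Qed.
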